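(* Let $\mathbf{E}\subseteq\mathbf{A}$ be finite symmetric integral relation algebras such that $\mathbf{A}$ is a special extension of $\mathbf{E}$. Let $a,b$ be distinct diversity atoms of $\mathbf{E}$ and let $u,v$ be diversity atoms of $\mathbf{C}_{\mathbf{E}}(\mathbf{A})$. If $u\le J(a,0)$ and $v\le J(b,0)$, then $u;v=J(a;b,0)$. In particular, if $a;b=0'$ then $u;v=0'$.
   Context: Relation algebras are in the sense of Tarski; $1'$ identity, $0'$ its complement, $;$ relative product; integral: $1'$ is an atom; symmetric: $x^{\smile}=x$; a diversity atom is an atom below $0'$. Special extension: $\mathbf{A}$ is a special extension of $\mathbf{E}$ if for all diversity atoms $a,b,c$ of $\mathbf{E}$: (1) if not $a=b=c$ and $a;b\ge c$, then $x;y\ge c$ whenever $x,y$ are atoms of $\mathbf{A}$ with $x\le a$, $y\le b$; (2) if $a;a\ge a$ then $x;y\cdot a\ne0$ whenever $x,y$ are atoms of $\mathbf{A}$ below $a$. The algebra $\mathbf{C}_{\mathbf{E}}(\mathbf{A})$: for each atom $x$ of $\mathbf{A}$ let $c(x)$ be the atom of $\mathbf{E}$ with $x\le c(x)$; $T(i,j,k)$ iff $(i\le j=k)$ or $(j\le k=i)$ or $(k\le i=j)$. Atoms: $1'$ and $x^{(i)}$ for diversity atoms $x$ of $\mathbf{A}$ and $i\in\omega$. $C$ is the set of all permutations of $(1',1',1')$, $(1',x^{(i)},x^{(i)})$, and $(x^{(i)},y^{(j)},z^{(k)})$ with $x;y\ge z$ in $\mathbf{A}$ and ($c(x)=c(y)=c(z)\Rightarrow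 T(i,j,k)$). $\mathbf{C}_{\mathbf{E}}(\mathbf{A})$ is the algebra of all sets of atoms with set Boolean operations, identity $\{1'\}$ (so its diversity element $0'$ is the set of all $x^{(i)}$), converse the identity map, and $X;Y=\{w:\exists u\in X,\exists v\in Y,(u,v,w)\in C\}$. For $a\in\mathbf{A}$, $n\in\omega$, $J(a,n)$ is the join of all $x^{(i)}$ with $x$ a diversity atom of $\mathbf{A}$, $x\le a$, $n\le i$, together with $1'$ if $1'\le a$. *)

From mathcomp Require Import all_boot all_order.
Set Implicit Arguments. Unset Strict Implicit. Unset Printing Implicit Defensive.

(* Tarski's axioms: Huntington's axiomatization of Boolean algebras on
   (ra_join, complement), plus the relation-algebra axioms for ; , converse, 1'. *)
Record RA (T : finType) := MkRA {
  ra_join : T -> T -> T;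
  ra_compl : T -> T;
  ra_comp : T -> T -> T;
  ra_conv : T -> T;
  ra_one : T;
  join_comm : forall x y, ra_join x y = ra_join y x;
  join_assoc : forall x y z, ra_join (ra_join x y) z = ra_join x (ra_join y z);
  huntington : forall x y,
    ra_join (ra_compl (ra_join (ra_compl x) y)) (ra_compl (ra_join (ra_compl x) (ra_compl y))) = x;
  comp_assoc : forall x y z, ra_comp (ra_comp x y) z = ra_comp x (ra_comp y z);
  comp_distr : forall x y z, ra_comp (ra_join x y) z = ra_join (ra_comp x z) (ra_comp y z);
  comp_one : forall x, ra_comp x ra_one = x;
  conv_inv : forall x, ra_conv (ra_conv x) = x;
  conv_join : forall x y, ra_conv (ra_join x y) = ra_join (ra_conv x) (ra_conv y);
  conv_comp : forall x y, ra_conv (ra_comp x y) = ra_comp (ra_conv y) (ra_conv x);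
  tarski : forall x y, ra_join (ra_comp (ra_conv x) (ra_compl (ra_comp x y))) (ra_compl y) = ra_compl y
}.

Section RADefs.
Variables (T : finType) (A : RA T).

Definition ra_meet (x y : T) : T := ra_compl A (ra_join A (ra_compl A x) (ra_compl A y)).
Definition ra_zero : T := ra_compl A (ra_join A (ra_one A) (ra_compl A (ra_one A))).
Definition diversity : T := ra_compl A (ra_one A).
Definition ra_le (x y : T) : bool := ra_join A x y == y.

Definition ra_atom (x : T) : bool := (x != ra_zero) && [forall y, ra_le y x ==> (y == ra_zero) || (y == x)].
Definition ra_divatom (x : T) : bool := ra_atom x && ra_le x diversity.

Definition symmetric_RA : Prop := forall x, ra_conv A x = x.
Definition integral_RA : Prop := ra_atom (ra_one A).

Definition subalgebra (E : {set T}) : Prop :=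
  [/\ ra_one A \in E,
      forall x y, x \in E -> y \in E -> ra_join A x y \in E,
      forall x, x \in E -> ra_compl A x \in E,
      forall x y, x \in E -> y \in E -> ra_comp A x y \in E
    & forall x, x \in E -> ra_conv A x \in E].

Definition Eatom (E : {set T}) (e : T) : bool :=
  [&& e \in E, e != ra_zero & [forall f, (f \in E) && ra_le f e ==> (f == ra_zero) || (f == e)]].
Definition Edivatom (E : {set T}) (e : T) : bool := Eatom E e && ra_le e diversity.

Definition special_ext (E : {set T}) : Prop :=
  (forall a b c, Edivatom E a -> Edivatom E b -> Edivatom E c ->
     ~ (a = b /\ b = c) -> ra_le c (ra_comp A a b) ->
     forall x y, ra_atom x -> ra_atom y -> ra_le x a -> ra_le y b -> ra_le c (ra_comp A x y))
  /\
  (forall a, Edivatom E a -> ra_le a (ra_comp A a a) ->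
     forall x y, ra_atom x -> ra_atom y -> ra_le x a -> ra_le y a -> ra_meet (ra_comp A x y) a != ra_zero).

Definition cE (E : {set T}) (x : T) : option T := [pick e | Eatom E e && ra_le x e].

Definition Tpred (i j k : nat) : Prop :=
  ((i <= j) /\ j = k) \/ ((j <= k) /\ k = i) \/ ((k <= i) /\ i = j).

(* atoms of C_E(A): 1' and x^(i) *)
Inductive CAtom := CId | CDiv of T & nat.

Definition Cvalid (w : CAtom) : Prop :=
  match w with CId => True | CDiv x _ => ra_divatom x end.

Definition Cbase (E : {set T}) (u v w : CAtom) : Prop :=
  match u, v, w with
  | CId, CId, CId => True
  | CId, CDiv x i, CDiv x' i' => ra_divatom x /\ x = x' /\ i = i'
  | CDiv x i, CDiv y j, CDiv z k =>
      [/\ ra_divatom x, ra_divatom y, ra_divatom z, ra_le z (ra_comp A x y) &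
          (cE E x = cE E y /\ cE E y = cE E z -> Tpred i j k)]
  | _, _, _ => False
  end.

Definition Ccyc (E : {set T}) (u v w : CAtom) : Prop :=
  Cbase E u v w \/ Cbase E u w v \/ Cbase E v u w \/
  Cbase E v w u \/ Cbase E w u v \/ Cbase E w v u.

(* elements of C_E(A): sets of atoms *)
Definition CSet := CAtom -> Prop.
Definition Cle (X Y : CSet) : Prop := forall w, X w -> Y w.
Definition Ceq (X Y : CSet) : Prop := forall w, X w <-> Y w.
Definition Celem (X : CSet) : Prop := Cle X Cvalid.
Definition Cempty (X : CSet) : Prop := forall w, ~ X w.
Definition Ccomp (E : {set T}) (X Y : CSet) : CSet :=
  fun w => exists u v, X u /\ Y v /\ Ccyc E u v w.
Definition Cdiversity : CSet :=
  fun w => match w with CId => False | CDiv x _ => ra_divatom x end.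
Definition Catom (X : CSet) : Prop :=
  [/\ Celem X, ~ Cempty X &
      forall W, Celem W -> Cle W X -> Cempty W \/ Ceq W X].
Definition Cdivatom (X : CSet) : Prop := Catom X /\ Cle X Cdiversity.

Definition J (a : T) (n : nat) : CSet :=
  fun w => match w with
           | CId => ra_le (ra_one A) a
           | CDiv x i => ra_divatom x /\ ra_le x a /\ n <= i
           end.

End RADefs.

(* Write u = {x^(i)} and v = {y^(j)}, so x <= a and y <= b.  Since a and b
   are distinct atoms of E, c(x) = a differs from c(y) = b and the condition T
   never applies: z^(k) lies in u;v iff some rotation of (x, y, z) is a cycle,
   which in a symmetric algebra means z <= x;y, and then z <= a;b.  Conversely,
   if z <= a;b then the atom of E above z lies below a;b, hence below x;y by
   the special extension property.  The identity is excluded on both sides,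
   since x <> y and a;b <= 0' for disjoint a and b. *)

From mathcomp Require Import all_boot all_order.
From Stdlib Require Import Classical.

Set Implicit Arguments. Unset Strict Implicit. Unset Printing Implicit Defensive.

Section RelationAlgebra.
Variables (T : finType) (A : RA T).

Local Notation "x ⊔ y" := (ra_join A x y) (at level 50, left associativity).
Local Notation "x ⊓ y" := (ra_meet A x y) (at level 40, left associativity).
Local Notation "¬ x" := (ra_compl A x) (at level 35, right associativity).
Local Notation "x ∘ y" := (ra_comp A x y) (at level 40, left associativity).
Local Notation "x ≤ y" := (ra_le A x y) (at level 70, no associativity).
Local Notation "⊥" := (ra_zero A).

Definition ra_top : T := ra_one A ⊔ ¬ ra_one A.
Local Notation "⊤" := ra_top.

Local Notation joinC := (join_comm A).
Local Notation joinA := (join_assoc A).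

Lemma joinCA x y z : x ⊔ (y ⊔ z) = y ⊔ (x ⊔ z).
Proof. by rewrite -!joinA (joinC x y). Qed.

Lemma joinACA x y z w : (x ⊔ y) ⊔ (z ⊔ w) = (x ⊔ z) ⊔ (y ⊔ w).
Proof. by rewrite !joinA (joinCA y z w). Qed.

(* Huntington's axiom writes x, ¬x and ¬¬x as joins of two of the four
   elements a, b, c, d below, so both sides equal a ⊔ b ⊔ c ⊔ d. *)
Lemma join_compl_complK x : x ⊔ ¬x = ¬¬x ⊔ ¬x.
Proof.
have h1 := huntington A x (¬¬x).
have h2 := huntington A (¬x) (¬x).
have h3 := huntington A (¬x) (¬¬x).
have h4 := huntington A (¬¬x) (¬x).
rewrite (joinC (¬¬x) (¬x)) in h2.
rewrite (joinC (¬¬x) (¬¬¬x)) in h3.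
rewrite (joinC (¬¬¬x) (¬x)) in h4.
set a := ¬(¬x ⊔ ¬¬¬x) in h1 h4 *; set b := ¬(¬x ⊔ ¬¬x) in h1 h2 *.
set c := ¬(¬¬¬x ⊔ ¬¬x) in h3 h4 *; set d := ¬(¬¬x ⊔ ¬¬x) in h2 h3 *.
transitivity ((b ⊔ a) ⊔ (d ⊔ c)); first by rewrite h1 h3.
by rewrite joinACA h2 h4 joinC.
Qed.

Lemma complK x : ¬¬x = x.
Proof.
have h := huntington A (¬¬x) (¬x).
rewrite (joinC (¬¬¬x) (¬x)) -(join_compl_complK (¬x)) in h.
by rewrite -h joinC huntington.
Qed.

Lemma huntington_compl x y : ¬(x ⊔ y) ⊔ ¬(x ⊔ ¬y) = ¬x.
Proof. by have := huntington A (¬x) y; rewrite complK. Qed.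

(* Both sides are the join of the four elements ¬(±x ⊔ ±y). *)
Lemma join_compl_eq x y : x ⊔ ¬x = y ⊔ ¬y.
Proof.
have split4 p q : p ⊔ ¬p = (¬(¬p ⊔ q) ⊔ ¬(¬p ⊔ ¬q)) ⊔ (¬(p ⊔ q) ⊔ ¬(p ⊔ ¬q)).
  by rewrite huntington huntington_compl.
rewrite (split4 x y) (split4 y x) (joinC (¬y) x) (joinC (¬y) (¬x)) (joinC y x) (joinC y (¬x)).
by rewrite [RHS]joinC joinACA (joinC (¬(x ⊔ y))) (joinC (¬(x ⊔ ¬y))) joinACA.
Qed.

Lemma joinxC x : x ⊔ ¬x = ⊤.
Proof. exact: join_compl_eq. Qed.

Lemma joinCx x : ¬x ⊔ x = ⊤.
Proof. by rewrite joinC joinxC. Qed.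

Lemma compl_top : ¬⊤ = ⊥.
Proof. by []. Qed.

Lemma join_bot_bot : ⊥ ⊔ ⊥ = ⊥.
Proof.
set z := ⊥ ⊔ ⊥.
have zT : ⊥ ⊔ ⊤ = ⊤ by rewrite -compl_top joinCx.
have h1 := huntington A ⊤ ⊤.
rewrite compl_top zT compl_top -/z in h1.
have h2 := huntington A ⊤ (¬z).
rewrite compl_top complK h1 compl_top in h2.
have h3 := huntington A (¬z) ⊤.
rewrite complK joinA zT zT compl_top (joinC z) h2 in h3.
by rewrite -(complK z) -h3.
Qed.

Lemma joinx0 x : x ⊔ ⊥ = x.
Proof.
have h := huntington A x x; rewrite joinCx compl_top in h.
by rewrite -h joinC -joinA join_bot_bot.
Qed.

Lemma join0x x : ⊥ ⊔ x = x.
Proof. by rewrite joinC joinx0. Qed.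

Lemma joinxx x : x ⊔ x = x.
Proof.
have h := huntington_compl x (¬x); rewrite complK joinxC compl_top join0x in h.
by rewrite -(complK (x ⊔ x)) h complK.
Qed.

Lemma joinx1 x : x ⊔ ⊤ = ⊤.
Proof. by rewrite -(joinxC x) -joinA joinxx. Qed.

Lemma lexx x : x ≤ x.
Proof. exact/eqP/joinxx. Qed.

Lemma le_trans x y z : x ≤ y -> y ≤ z -> x ≤ z.
Proof. by move=> /eqP xy /eqP yz; apply/eqP; rewrite -yz -joinA xy. Qed.

Lemma le_anti x y : x ≤ y -> y ≤ x -> x = y.
Proof. by move=> /eqP xy /eqP yx; rewrite -xy joinC yx. Qed.

Lemma leUl x y : x ≤ x ⊔ y.
Proof. by apply/eqP; rewrite -joinA joinxx. Qed.

Lemma leUr x y : y ≤ x ⊔ y.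
Proof. by rewrite joinC leUl. Qed.

Lemma join_lub x y z : x ≤ z -> y ≤ z -> x ⊔ y ≤ z.
Proof. by move=> /eqP xz /eqP yz; apply/eqP; rewrite joinA yz xz. Qed.

Lemma lex1 x : x ≤ ⊤.
Proof. exact/eqP/joinx1. Qed.

Lemma lex0 x : x ≤ ⊥ -> x = ⊥.
Proof. by move/eqP; rewrite joinx0. Qed.

Lemma le_compl x y : x ≤ y -> ¬y ≤ ¬x.
Proof.
move/eqP=> xy; have h := huntington_compl x y; rewrite xy in h.
by rewrite -h leUl.
Qed.

Lemma le_complE x y : (¬y ≤ ¬x) = (x ≤ y).
Proof. by apply/idP/idP => [/le_compl|/le_compl //]; rewrite !complK. Qed.

Lemma le_compl_self x : x ≤ ¬x -> x = ⊥.
Proof. by move/eqP; rewrite joinxC => h; rewrite -(complK x) -h. Qed.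

Lemma meetC x y : x ⊓ y = y ⊓ x.
Proof. by rewrite /ra_meet joinC. Qed.

Lemma leIl x y : x ⊓ y ≤ x.
Proof. by rewrite -[X in _ ≤ X](huntington A x y) leUr. Qed.

Lemma leIr x y : x ⊓ y ≤ y.
Proof. by rewrite meetC leIl. Qed.

Lemma meet_glb x y z : z ≤ x -> z ≤ y -> z ≤ x ⊓ y.
Proof. by move=> zx zy; rewrite -le_complE complK join_lub // le_complE. Qed.

Lemma meet_eq0_le_compl x y : x ⊓ y = ⊥ -> x ≤ ¬y.
Proof.
move=> xy0; have h := huntington A x (¬y).
rewrite complK -/(x ⊓ y) xy0 join0x in h.
by rewrite -h le_complE leUr.
Qed.

Lemma atom_neq0 x : ra_atom A x -> x <> ⊥.
Proof. by case/andP=> /eqP. Qed.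

Lemma divatom_neq0 x : ra_divatom A x -> x <> ⊥.
Proof. by case/andP=> /atom_neq0. Qed.

Lemma atom_le_or_compl z p : ra_atom A z -> z ≤ p \/ z ≤ ¬p.
Proof.
case/andP=> _ /forallP /(_ (z ⊓ p)) /implyP /(_ (leIl _ _)) /orP [/eqP zp0|/eqP zp].
  by right; apply: meet_eq0_le_compl.
by left; rewrite -zp leIr.
Qed.

Lemma le_comp2r x y z : x ≤ y -> x ∘ z ≤ y ∘ z.
Proof. by move/eqP=> xy; rewrite -xy comp_distr leUl. Qed.

Section Symmetric.
Hypothesis symA : symmetric_RA A.

Lemma compC x y : x ∘ y = y ∘ x.
Proof. by have := conv_comp A x y; rewrite !symA. Qed.

Lemma le_comp2l x y z : x ≤ y -> z ∘ x ≤ z ∘ y.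
Proof. by rewrite !(compC z); apply: le_comp2r. Qed.

Lemma comp_compl_comp_le x y : x ∘ ¬(x ∘ y) ≤ ¬y.
Proof. by apply/eqP; rewrite -{1}(symA x) tarski. Qed.

(* The cycle law for atoms: if y ≤ x ∘ z failed to give z ≤ x ∘ y, then
   z ≤ ¬(x ∘ y) and y ≤ x ∘ ¬(x ∘ y) ≤ ¬y. *)
Lemma atom_le_comp_cycle x y z :
  ra_atom A z -> y <> ⊥ -> y ≤ x ∘ z -> z ≤ x ∘ y.
Proof.
move=> atz y0 yxz; case: (atom_le_or_compl (x ∘ y) atz) => // zc.
have := le_trans yxz (le_trans (le_comp2l x zc) (comp_compl_comp_le x y)).
by move/le_compl_self.
Qed.

Lemma one_not_le_comp_disjoint a b :
  ra_one A <> ⊥ -> b ≤ ¬a -> ~~ (ra_one A ≤ a ∘ b).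
Proof.
move=> one0 ba; apply/negP => oab; apply: one0; apply: le_compl_self.
have := le_trans oab (le_comp2l a ba).
by rewrite -{2}(comp_one A a) => /le_trans; apply; apply: comp_compl_comp_le.
Qed.

End Symmetric.

Section Subalgebra.
Variable E : {set T}.
Hypothesis subE : subalgebra A E.

Lemma subalg_compl x : x \in E -> ¬x \in E.
Proof. by case: subE => _ _ + _ _; apply. Qed.

Lemma subalg_join x y : x \in E -> y \in E -> x ⊔ y \in E.
Proof. by case: subE => _ + _ _ _; apply. Qed.

Lemma subalg_comp x y : x \in E -> y \in E -> x ∘ y \in E.
Proof. by case: subE => _ _ _ + _; apply. Qed.

Lemma subalg_one : ra_one A \in E.
Proof. by case: subE. Qed.

Lemma subalg_meet x y : x \in E -> y \in E -> x ⊓ y \in E.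
Proof. by move=> xE yE; rewrite subalg_compl // subalg_join // subalg_compl. Qed.

Lemma subalg_top : ⊤ \in E.
Proof. by rewrite subalg_join ?subalg_compl ?subalg_one. Qed.

Lemma subalg_diversity : diversity A \in E.
Proof. exact/subalg_compl/subalg_one. Qed.

Lemma Edivatom_Eatom a : Edivatom A E a -> Eatom A E a.
Proof. by case/andP. Qed.

Lemma Edivatom_mem a : Edivatom A E a -> a \in E.
Proof. by case/andP=> /and3P []. Qed.

Lemma Eatom_le_compl a b : Eatom A E a -> Eatom A E b -> a <> b -> b ≤ ¬a.
Proof.
move=> /and3P [aE a0 /forallP aatom] /and3P [bE b0 /forallP batom] ab.
have := aatom (a ⊓ b); rewrite subalg_meet // leIl /= => /orP [/eqP ab0|/eqP aba].
  by apply: meet_eq0_le_compl; rewrite meetC.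
have := batom a; rewrite aE -{1}aba leIr /= => /orP [/eqP a0'|/eqP ba]; last by case: (ab ba).
by rewrite a0' eqxx in a0.
Qed.

Lemma Eatom_unique x a b :
  x <> ⊥ -> Eatom A E a -> Eatom A E b -> x ≤ a -> x ≤ b -> a = b.
Proof.
move=> x0 atEa atEb xa xb; have [//|/eqP ab] := eqVneq a b.
have ba := Eatom_le_compl atEa atEb ab.
exfalso; apply: x0; apply: le_compl_self; apply: le_trans xa _.
by rewrite -le_complE complK; apply: le_trans xb ba.
Qed.

Lemma cE_Eatom x a : x <> ⊥ -> Eatom A E a -> x ≤ a -> cE A E x = Some a.
Proof.
move=> x0 atEa xa; rewrite /cE; case: pickP => [c /andP [atEc xc]|none].
  by rewrite (Eatom_unique x0 atEc atEa xc xa).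
by have := none a; rewrite atEa xa.
Qed.

(* The E-atom above an atom z is the least element of E above z; it is found
   as an element of E above z with the fewest elements below it. *)
Lemma Eatom_above_atom z : ra_atom A z ->
  exists c, [/\ Eatom A E c, z ≤ c & forall g, g \in E -> z ≤ g -> c ≤ g].
Proof.
move=> atz; pose above e := (e \in E) && (z ≤ e).
have above_top : above ⊤ by rewrite /above subalg_top lex1.
case: (arg_minnP (fun e => #|[pred f | f ≤ e]|) above_top) => c /andP [cE zc] cmin.
have c_least g : g \in E -> z ≤ g -> c ≤ g.
  move=> gE zg; have above_cg : above (c ⊓ g) by rewrite /above subalg_meet // meet_glb.
  have sub : [pred f | f ≤ c ⊓ g] \subset [pred f | f ≤ c].
    by apply/subsetP => f; rewrite !inE => /le_trans; apply; apply: leIl.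
  have card_eq : #|[pred f | f ≤ c ⊓ g]| = #|[pred f | f ≤ c]|.
    by apply/eqP; rewrite eqn_leq cmin // subset_leq_card.
  have /(_ c) := subset_cardP card_eq sub; rewrite !inE lexx => cg.
  by apply: le_trans (leIr c g); rewrite cg.
exists c; split => //; rewrite /Eatom cE /=; apply/andP; split.
  by apply/eqP => c0; apply: (atom_neq0 atz); apply: lex0; rewrite -c0.
apply/forallP => f; apply/implyP => /andP [fE fc].
case: (atom_le_or_compl f atz) => zf.
  by rewrite (le_anti fc (c_least _ fE zf)) eqxx orbT.
by rewrite (le_compl_self (le_trans fc (c_least _ (subalg_compl fE) zf))) eqxx.
Qed.

End Subalgebra.

Lemma Cdivatom_singleton (u : CSet T) : Cdivatom A u ->
  exists x i, ra_divatom A x /\ forall w, u w <-> w = CDiv x i.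
Proof.
case=> [[uC u_ne u_min] u_div].
have [w uw] : exists w, u w by apply: not_all_not_ex.
have [/(_ w) []//|uw_eq] : Cempty (eq^~ w) \/ Ceq (eq^~ w) u.
  by apply: u_min => w' ->; [apply: uC|].
case: w uw uw_eq (u_div w uw) => // x i uw uw_eq divx.
by exists x, i; split => // w; split => [/uw_eq //|->].
Qed.

Lemma Ccomp_singletons E (u v : CSet T) p q :
  (forall w, u w <-> w = p) -> (forall w, v w <-> w = q) ->
  forall w, Ccomp A E u v w <-> Ccyc A E p q w.
Proof.
move=> up vq w; split => [[p' [q' [/up -> [/vq -> //]]]]|pqw].
by exists p, q; rewrite up vq.
Qed.

Lemma Ccyc_div_id E x i y j : Ccyc A E (CDiv x i) (CDiv y j) (CId T) -> x = y.
Proof. by do 4?case=> [//|]; case=> [[_ [] //]|[_ [] //]]. Qed.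

Lemma J_diversity : ra_one A <> ⊥ -> Ceq (J A (diversity A) 0) (Cdiversity A).
Proof.
move=> one0 [|x i] /=; last by split=> [[]//|divx]; split=> //; case/andP: divx.
by split=> // /le_compl_self.
Qed.

Section DiversityAtomProducts.
Variable E : {set T}.
Hypotheses (symA : symmetric_RA A) (subE : subalgebra A E).

Lemma Ccyc_div_le x i y j z k :
  Ccyc A E (CDiv x i) (CDiv y j) (CDiv z k) -> ra_divatom A z /\ z ≤ x ∘ y.
Proof.
have cycle p q r : ra_divatom A r -> ra_divatom A q -> q ≤ p ∘ r -> r ≤ p ∘ q.
  by case/andP=> atr _ /divatom_neq0; apply: atom_le_comp_cycle.
case=> [[_ _ dz zxy _]|[[dx dz dy yxz _]|[[dy _ dz zyx _]|[[dy dz dx xyz _]|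
        [[dz dx dy yzx _]|[dz dy dx xzy _]]]]]]; split=> //.
- exact: cycle.
- by rewrite compC.
- by rewrite compC //; apply: cycle.
- by apply: cycle; rewrite // compC.
- by rewrite compC //; apply: cycle; rewrite // compC.
Qed.

Hypothesis specialE : special_ext A E.

(* The E-atom c above z lies below a ∘ b, so the special extension property
   puts it below x ∘ y. *)
Lemma le_comp_special a b x y z :
  Edivatom A E a -> Edivatom A E b -> a <> b ->
  ra_atom A x -> ra_atom A y -> x ≤ a -> y ≤ b ->
  ra_divatom A z -> z ≤ a ∘ b -> z ≤ x ∘ y.
Proof.
move=> dEa dEb ab atx aty xa yb /andP [atz zdiv] zab.
have [c [atEc zc c_least]] := Eatom_above_atom subE atz.
have dEc : Edivatom A E c by rewrite /Edivatom atEc c_least // subalg_diversity.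
have cab : c ≤ a ∘ b by rewrite c_least // subalg_comp // Edivatom_mem.
by apply: le_trans zc _; apply: (specialE.1 a b c) => // -[].
Qed.

Lemma Ccyc_div_J a b x i y j : ra_one A <> ⊥ ->
  Edivatom A E a -> Edivatom A E b -> a <> b ->
  ra_divatom A x -> ra_divatom A y -> x ≤ a -> y ≤ b ->
  Ceq (Ccyc A E (CDiv x i) (CDiv y j)) (J A (a ∘ b) 0).
Proof.
move=> one0 dEa dEb ab dx dy xa yb.
have [atEa atEb] := (Edivatom_Eatom dEa, Edivatom_Eatom dEb).
have [x0 y0] := (divatom_neq0 dx, divatom_neq0 dy).
case=> [|z k] /=.
  split=> [/Ccyc_div_id xy|oab].
    by exfalso; apply: ab; apply: (Eatom_unique subE x0 atEa atEb xa); rewrite xy.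
  by have := one_not_le_comp_disjoint symA one0 (Eatom_le_compl subE atEa atEb ab); rewrite oab.
split=> [/Ccyc_div_le [dz zxy]|[dz [zab _]]].
  do 2!split=> //; apply: le_trans zxy _.
  exact: le_trans (le_comp2r y xa) (le_comp2l symA a yb).
left; split=> //.
  by apply: le_comp_special xa yb dz zab => //; case/andP: dx; case/andP: dy.
(* c(x) = a differs from c(y) = b, so the condition T is vacuous. *)
by rewrite (cE_Eatom subE x0 atEa xa) (cE_Eatom subE y0 atEb yb) => -[[]].
Qed.

End DiversityAtomProducts.

End RelationAlgebra.

Theorem lemma3 (T : finType) (A : RA T) (E : {set T}) :
  symmetric_RA A -> integral_RA A -> subalgebra A E -> special_ext A E ->
  forall a b : T, Edivatom A E a -> Edivatom A E b -> a <> b ->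
  forall u v : CSet T, Cdivatom A u -> Cdivatom A v ->
  Cle u (J A a 0) -> Cle v (J A b 0) ->
  Ceq (Ccomp A E u v) (J A (ra_comp A a b) 0) /\
  (ra_comp A a b = diversity A -> Ceq (Ccomp A E u v) (Cdiversity A)).
Proof.
move=> symA intA subE specialE a b dEa dEb ab u v du dv ua vb.
have one0 := atom_neq0 intA.
have [x [i [dx ux]]] := Cdivatom_singleton du.
have [y [j [dy vy]]] := Cdivatom_singleton dv.
have [_ [xa _]] := ua _ (proj2 (ux _) erefl).
have [_ [yb _]] := vb _ (proj2 (vy _) erefl).
have uvJ : Ceq (Ccomp A E u v) (J A (ra_comp A a b) 0).
  move=> w; apply: iff_trans (Ccomp_singletons A E ux vy w) _.
  exact: Ccyc_div_J.
split=> // abdiv w; apply: iff_trans (uvJ w) _.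
by rewrite abdiv; apply: J_diversity.
Qed.
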